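(* Consider two sets of matrices $\mathbf{A}_1, \dots, \mathbf{A}_s$ and $\hat{\mathbf{A}}_1, \dots, \hat{\mathbf{A}}_s$ with $\|\mathbf{A}_i - \hat{\mathbf{A}}_i\| \leq \epsilon_{\mathbf{A}}$ for all $i \in [s]$. Assume there exists a pair $\{\xi, \kappa\}$ such that for all $t \in \mathbb{N}$, $\max_{\sigma_{1:t} \in [s]^{t}}\|\mathbf{A}_{\sigma_1} \cdots \mathbf{A}_{\sigma_t}\| \leq \kappa \xi^t$. Then, for all $t$ and any sequence $\sigma_{1:t} \in [s]^{t}$, we have (i) $\|\prod_{h=1}^t \hat{\mathbf{A}}_{\sigma_h}\| \leq \kappa (\kappa \epsilon_{\mathbf{A}} + \xi)^t$; (ii) $\|\prod_{h=1}^t \hat{\mathbf{A}}_{\sigma_h} - \prod_{h=1}^t \mathbf{A}_{\sigma_h}\| \leq \kappa^2 t (\kappa \epsilon_{\mathbf{A}} + \xi)^{t-1} \epsilon_{\mathbf{A}}$. *)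

From HB Require Import structures.
From mathcomp Require Import all_boot all_order all_algebra.
From mathcomp Require Import boolp classical_sets reals.
Set Implicit Arguments. Unset Strict Implicit. Unset Printing Implicit Defensive.
Import Order.TTheory GRing.Theory Num.Theory.
Local Open Scope ring_scope.
Local Open Scope classical_set_scope.

Definition vnorm2 {R : realType} {n : nat} (x : 'cV[R]_n) : R :=
  Num.sqrt (\sum_(i < n) (x i 0) ^+ 2).

Definition opnorm {R : realType} {n : nat} (A : 'M[R]_n) : R :=
  sup [set vnorm2 (A *m x) | x in [set x : 'cV[R]_n | vnorm2 x <= 1]].

Definition mxprod {R : realType} {n : nat} (Ms : seq 'M[R]_n) : 'M[R]_n :=
  foldr (fun M P => M *m P) 1%:M Ms.

(* Write [Ahat_a = A_a - (A_a - Ahat_a)] and peel the factors of the perturbed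
   product off one at a time:
     [P_p Q_(a :: l) = P_(p ++ [a]) Q_l - P_p (A_a - Ahat_a) Q_l],
   where [P] and [Q] are products of the [A_i] and of the [Ahat_i].  Carrying
   the prefix [p] of exact factors through an induction on [l] keeps the
   hypothesis [|P_p| <= kappa xi^|p|] applicable, and every peeled-off term costs
   [kappa xi^|p| eps kappa (kappa eps + xi)^|l|].  This gives
   [|P_p Q_l| <= kappa xi^|p| (kappa eps + xi)^|l|], and in the same way the
   bound on [P_p (Q_l - P_l)]; the theorem is the case [p = [::]]. *)

From HB Require Import structures.
From mathcomp Require Import all_boot all_order all_algebra.
From mathcomp Require Import boolp classical_sets reals.
From mathcomp Require Import ring lra.
Import Order.TTheory GRing.Theory Num.Theory.
Local Open Scope ring_scope.
Set Implicit Arguments. Unset Strict Implicit.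

Section EuclideanNorm.
Variables (R : realType) (n : nat).
Implicit Types (x y : 'cV[R]_n).

Lemma sumsq_ge0 x : 0 <= \sum_(i < n) x i 0 ^+ 2.
Proof. by apply: sumr_ge0 => i _; rewrite sqr_ge0. Qed.

Lemma vnorm2_ge0 x : 0 <= vnorm2 x.
Proof. exact: sqrtr_ge0. Qed.

Lemma sqr_vnorm2 x : vnorm2 x ^+ 2 = \sum_(i < n) x i 0 ^+ 2.
Proof. by rewrite sqr_sqrtr ?sumsq_ge0. Qed.

Lemma vnorm2_eq0 x : vnorm2 x = 0 -> x = 0.
Proof.
move=> x0; have := sqr_vnorm2 x; rewrite x0 expr0n => /esym/psumr_eq0P sq_eq0.
apply/matrixP => i j; rewrite ord1 mxE; apply/eqP.
by rewrite -sqrf_eq0 sq_eq0 // => k _; exact: sqr_ge0.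
Qed.

Lemma vnorm2_0 : vnorm2 (0 : 'cV[R]_n) = 0.
Proof. by rewrite /vnorm2 big1 ?sqrtr0 // => i _; rewrite mxE expr0n. Qed.

Lemma vnorm2Z (c : R) x : vnorm2 (c *: x) = `|c| * vnorm2 x.
Proof.
have sqr_scale i : (c *: x) i 0 ^+ 2 = c ^+ 2 * x i 0 ^+ 2 by rewrite mxE exprMn.
rewrite /vnorm2 (eq_bigr _ (fun i _ => sqr_scale i)) -mulr_sumr.
by rewrite sqrtrM ?sqr_ge0 // sqrtr_sqr.
Qed.

Lemma vnorm2N x : vnorm2 (- x) = vnorm2 x.
Proof. by rewrite -scaleN1r vnorm2Z normrN normr1 mul1r. Qed.

Lemma cauchy_schwarz x y : \sum_(i < n) x i 0 * y i 0 <= vnorm2 x * vnorm2 y.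
Proof.
set c := \sum_(i < n) _; set u := vnorm2 x; set v := vnorm2 y.
have [uv_gt0|] := ltrP 0 (u * v).
  (* expanding [0 <= sum_i (v x_i - u y_i)^2] gives [0 <= 2 u v (u v - c)] *)
  have : 0 <= \sum_(i < n) (v * x i 0 - u * y i 0) ^+ 2.
    by apply: sumr_ge0 => i _; rewrite sqr_ge0.
  have -> : \sum_(i < n) (v * x i 0 - u * y i 0) ^+ 2 =
      v ^+ 2 * \sum_(i < n) x i 0 ^+ 2 - 2 * (u * v) * c
      + u ^+ 2 * \sum_(i < n) y i 0 ^+ 2.
    rewrite /c !mulr_sumr -sumrB -!big_split /=.
    by apply: eq_bigr => i _; ring.
  rewrite -!sqr_vnorm2 -/u -/v; nra.
rewrite le_eqVlt ltNge mulr_ge0 ?vnorm2_ge0 // orbF mulf_eq0 /c /u /v.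
by case/orP => /eqP/vnorm2_eq0 ->; rewrite vnorm2_0 big1 ?(mulr0, mul0r) // => i _;
  rewrite mxE ?(mulr0, mul0r).
Qed.

Lemma ler_norm_cauchy_schwarz x y :
  `|\sum_(i < n) x i 0 * y i 0| <= vnorm2 x * vnorm2 y.
Proof.
rewrite ler_norml cauchy_schwarz andbT lerNl.
have := cauchy_schwarz x (- y); rewrite vnorm2N.
by under eq_bigr => i _ do rewrite mxE mulrN; rewrite sumrN.
Qed.

Lemma ler_vnorm2D x y : vnorm2 (x + y) <= vnorm2 x + vnorm2 y.
Proof.
rewrite -ler_sqr ?nnegrE ?addr_ge0 ?vnorm2_ge0 //.
rewrite sqrrD !sqr_vnorm2.
have -> : \sum_(i < n) (x + y) i 0 ^+ 2 =
    \sum_(i < n) x i 0 ^+ 2 + (\sum_(i < n) x i 0 * y i 0) *+ 2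
    + \sum_(i < n) y i 0 ^+ 2.
  by rewrite -sumrMnl -!big_split; apply: eq_bigr => i _; rewrite mxE sqrrD.
by rewrite lerD2r lerD2l lerMn2r cauchy_schwarz orbT.
Qed.

End EuclideanNorm.

Section OperatorNorm.
Local Open Scope classical_set_scope.
Variables (R : realType) (n : nat).
Implicit Types (x : 'cV[R]_n) (M N : 'M[R]_n).

Lemma opnorm_has_sup M :
  has_sup [set vnorm2 (M *m x) | x in [set x | vnorm2 x <= 1]].
Proof.
split; first by exists 0, 0; rewrite /= ?mulmx0 vnorm2_0.
exists (Num.sqrt (\sum_(i < n) vnorm2 (row i M)^T ^+ 2)) => _ [x /= x_le1 <-].
rewrite /vnorm2 ler_sqrt; last by apply: sumr_ge0 => i _; rewrite sqr_ge0.
apply: ler_sum => i _.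
have -> : (M *m x) i 0 = \sum_(j < n) (row i M)^T j 0 * x j 0.
  by rewrite mxE; apply: eq_bigr => j _; rewrite !mxE.
rewrite -real_normK ?num_real // ler_sqr ?nnegrE ?vnorm2_ge0 //.
apply: le_trans (ler_norm_cauchy_schwarz _ _) _.
by rewrite ler_piMr ?vnorm2_ge0.
Qed.

Lemma vnorm2_mulmx_le_opnorm M x : vnorm2 x <= 1 -> vnorm2 (M *m x) <= opnorm M.
Proof. by move=> x_le1; apply: sup_upper_bound (opnorm_has_sup M) _ _; exists x. Qed.

Lemma opnorm_le M c :
  (forall x, vnorm2 x <= 1 -> vnorm2 (M *m x) <= c) -> opnorm M <= c.
Proof.
move=> Mc; apply: ge_sup; first by exists 0, 0; rewrite /= ?mulmx0 vnorm2_0.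
by move=> _ [x x_le1 <-]; exact: Mc.
Qed.

Lemma opnorm_ge0 M : 0 <= opnorm M.
Proof.
by rewrite -(vnorm2_0 R n) -(mulmx0 _ M) vnorm2_mulmx_le_opnorm // vnorm2_0.
Qed.

Lemma opnorm0 : opnorm (0 : 'M[R]_n) = 0.
Proof.
apply/eqP; rewrite eq_le opnorm_ge0 andbT.
by apply: opnorm_le => x _; rewrite mul0mx vnorm2_0.
Qed.

Lemma ler_vnorm2_mulmx M x : vnorm2 (M *m x) <= opnorm M * vnorm2 x.
Proof.
have [/vnorm2_eq0 ->|x_neq0] := eqVneq (vnorm2 x) 0.
  by rewrite mulmx0 vnorm2_0 mulr0.
have x_gt0 : 0 < vnorm2 x by rewrite lt_def x_neq0 vnorm2_ge0.
have := vnorm2_mulmx_le_opnorm M (x := (vnorm2 x)^-1 *: x).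
rewrite -scalemxAr !vnorm2Z ger0_norm ?invr_ge0 ?vnorm2_ge0 // mulVf // lexx.
by move=> /(_ isT); rewrite mulrC ler_pdivrMr.
Qed.

Lemma ler_opnormM M N : opnorm (M *m N) <= opnorm M * opnorm N.
Proof.
apply: opnorm_le => x x_le1; rewrite -mulmxA.
apply: le_trans (ler_vnorm2_mulmx _ _) _.
rewrite ler_wpM2l ?opnorm_ge0 //; apply: le_trans (ler_vnorm2_mulmx _ _) _.
by rewrite ler_piMr ?opnorm_ge0.
Qed.

Lemma ler_opnormD M N : opnorm (M + N) <= opnorm M + opnorm N.
Proof.
apply: opnorm_le => x x_le1; rewrite mulmxDl.
by apply: le_trans (ler_vnorm2D _ _) _; rewrite lerD ?vnorm2_mulmx_le_opnorm.
Qed.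

Lemma opnormN M : opnorm (- M) = opnorm M.
Proof.
suff opnormN_le N : opnorm (- N) <= opnorm N.
  by apply/eqP; rewrite eq_le opnormN_le -{1}(opprK M) opnormN_le.
by apply: opnorm_le => x x_le1; rewrite mulNmx vnorm2N vnorm2_mulmx_le_opnorm.
Qed.

Lemma ler_opnormB M N : opnorm (M - N) <= opnorm M + opnorm N.
Proof. by rewrite -(opnormN N) ler_opnormD. Qed.

Lemma opnormM_le M N a b :
  opnorm M <= a -> opnorm N <= b -> opnorm (M *m N) <= a * b.
Proof.
move=> Ma Nb; apply: le_trans (ler_opnormM _ _) _.
by rewrite ler_pM ?opnorm_ge0.
Qed.

End OperatorNorm.

Lemma mxprod_rcons (R : realType) (n : nat) (Ms : seq 'M[R]_n) (M : 'M[R]_n) :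
  mxprod (rcons Ms M) = mxprod Ms *m M.
Proof. by elim: Ms => [|N Ms IH] /=; rewrite ?mul1mx ?mulmx1 // IH mulmxA. Qed.

Section PerturbedProducts.
Variables (R : realType) (n s : nat) (A Ahat : 'I_s -> 'M[R]_n) (eps xi kappa : R).
Hypothesis opnorm_sub_le : forall i, opnorm (A i - Ahat i) <= eps.
Let prodA (l : seq 'I_s) := mxprod [seq A i | i <- l].
Let prodAhat (l : seq 'I_s) := mxprod [seq Ahat i | i <- l].
Hypothesis opnorm_prodA_le : forall l, opnorm (prodA l) <= kappa * xi ^+ size l.
Let r := kappa * eps + xi.

Lemma prodA_rcons p a : prodA (rcons p a) = prodA p *m A a.
Proof. by rewrite /prodA map_rcons mxprod_rcons. Qed.

Lemma mulmx_prodA_prodAhat_cons p a l :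
  prodA p *m prodAhat (a :: l) =
  prodA (rcons p a) *m prodAhat l - prodA p *m (A a - Ahat a) *m prodAhat l.
Proof. by rewrite prodA_rcons /prodAhat /= -!mulmxA -mulmxBr -mulmxBl subKr. Qed.

Lemma mulmx_prodA_sub_cons p a l :
  prodA p *m (prodAhat (a :: l) - prodA (a :: l)) =
  prodA (rcons p a) *m (prodAhat l - prodA l)
  - prodA p *m (A a - Ahat a) *m prodAhat l.
Proof.
rewrite prodA_rcons /prodAhat /prodA /= -!mulmxA -!mulmxBr; congr (_ *m _).
by rewrite mulmxBr mulmxBl opprB [RHS]addrC addrA subrK.
Qed.

Lemma opnorm_mulmx_prodA_prodAhat p l :
  opnorm (prodA p *m prodAhat l) <= kappa * xi ^+ size p * r ^+ size l.
Proof.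
elim: l p => [|a l IH] p; first by rewrite /prodAhat mulmx1 expr0 mulr1.
have prodAhat_le : opnorm (prodAhat l) <= kappa * r ^+ size l.
  by have := IH [::]; rewrite /prodA mul1mx expr0 mulr1.
have := IH (rcons p a); rewrite size_rcons => first_le.
have second_le := opnormM_le (opnormM_le (opnorm_prodA_le p) (opnorm_sub_le a))
  prodAhat_le.
rewrite mulmx_prodA_prodAhat_cons; apply: le_trans (ler_opnormB _ _) _.
suff -> : kappa * xi ^+ size p * r ^+ size (a :: l) =
    kappa * xi ^+ (size p).+1 * r ^+ size l
    + kappa * xi ^+ size p * eps * (kappa * r ^+ size l) by exact: lerD.
by rewrite /r /= !exprS; ring.
Qed.

Lemma opnorm_prodAhat_le l : opnorm (prodAhat l) <= kappa * r ^+ size l.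
Proof.
by have := opnorm_mulmx_prodA_prodAhat [::] l; rewrite /prodA mul1mx expr0 mulr1.
Qed.

Lemma opnorm_mulmx_prodA_sub p l :
  opnorm (prodA p *m (prodAhat l - prodA l)) <=
  kappa ^+ 2 * xi ^+ size p * (size l)%:R * r ^+ (size l).-1 * eps.
Proof.
elim: l p => [|a l IH] p.
  by rewrite subrr mulmx0 opnorm0 /= mulr0n mulr0 !mul0r.
have := IH (rcons p a); rewrite size_rcons => first_le.
have second_le := opnormM_le (opnormM_le (opnorm_prodA_le p) (opnorm_sub_le a))
  (opnorm_prodAhat_le l).
rewrite mulmx_prodA_sub_cons; apply: le_trans (ler_opnormB _ _) _.
apply: le_trans (lerD first_le second_le) _.
have kappa_ge0 : 0 <= kappa.
  by have := opnorm_prodA_le [::]; rewrite expr0 mulr1; exact: le_trans (opnorm_ge0 _).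
have eps_ge0 : 0 <= eps := le_trans (opnorm_ge0 _) (opnorm_sub_le a).
have prodA_bound_ge0 : 0 <= kappa * xi ^+ size p :=
  le_trans (opnorm_ge0 _) (opnorm_prodA_le p).
have prodAhat_bound_ge0 : 0 <= kappa * r ^+ (size l).-1.
  rewrite -size_behead; exact: le_trans (opnorm_ge0 _) (opnorm_prodAhat_le _).
set m := size l.
(* The slack is [kappa^2 xi^|p| eps m (r^m - xi r^(m-1))], and [r - xi = kappa eps]. *)
have slack_ge0 :
    0 <= kappa * xi ^+ size p * (kappa * r ^+ m.-1) * kappa * eps ^+ 2 * m%:R.
  by apply/mulr_ge0/ler0n; apply/mulr_ge0/sqr_ge0; apply/mulr_ge0 => //; exact/mulr_ge0.
suff -> : kappa ^+ 2 * xi ^+ size p * (size (a :: l))%:R * r ^+ (size (a :: l)).-1 * eps =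
    kappa ^+ 2 * xi ^+ (size p).+1 * m%:R * r ^+ m.-1 * eps
    + kappa * xi ^+ size p * eps * (kappa * r ^+ m)
    + kappa * xi ^+ size p * (kappa * r ^+ m.-1) * kappa * eps ^+ 2 * m%:R.
  by rewrite lerDl.
rewrite /= /r /m; case: (size l) => [|k] /=; rewrite ?exprS; ring.
Qed.

Lemma opnorm_prodAhat_sub_prodA l :
  opnorm (prodAhat l - prodA l) <=
  kappa ^+ 2 * (size l)%:R * r ^+ (size l).-1 * eps.
Proof.
by have := opnorm_mulmx_prodA_sub [::] l; rewrite {1}/prodA mul1mx expr0 mulr1.
Qed.

End PerturbedProducts.

Unset Implicit Arguments. Set Strict Implicit.

Theorem lemma10 (R : realType) (n s : nat) (A Ahat : 'I_s -> 'M[R]_n)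
    (epsA xi kappa : R) :
  (forall i : 'I_s, opnorm (A i - Ahat i) <= epsA) ->
  (forall (t : nat) (sigma : t.-tuple 'I_s),
      opnorm (mxprod [seq A i | i <- sigma]) <= kappa * xi ^+ t) ->
  forall (t : nat) (sigma : t.-tuple 'I_s),
    opnorm (mxprod [seq Ahat i | i <- sigma]) <= kappa * (kappa * epsA + xi) ^+ t
    /\
    opnorm (mxprod [seq Ahat i | i <- sigma] - mxprod [seq A i | i <- sigma])
      <= kappa ^+ 2 * t%:R * (kappa * epsA + xi) ^+ t.-1 * epsA.
Proof.
move=> opnorm_sub_le opnorm_prod_le t sigma.
have opnorm_prodA_le (l : seq 'I_s) :
    opnorm (mxprod [seq A i | i <- l]) <= kappa * xi ^+ size l.
  exact: opnorm_prod_le _ (in_tuple l).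
split.
  by have := opnorm_prodAhat_le opnorm_sub_le opnorm_prodA_le sigma; rewrite size_tuple.
by have := opnorm_prodAhat_sub_prodA opnorm_sub_le opnorm_prodA_le sigma;
  rewrite size_tuple.
Qed.
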